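(* In the oligopoly game below, for all parameter values ($\alpha>0$, unit $\boldsymbol\beta$, $\boldsymbol\gamma$ with all entries positive) there exists at least one equilibrium of one of the following types: (a) an equilibrium with $\mathbf A^*\mathbf q^*=\boldsymbol\beta$ and $\mathbf q^*=\boldsymbol\gamma/(2+\alpha)$; (b) an equilibrium with $\mathbf a_i^*=\boldsymbol\beta$ for all $i$ (product concentration); (c) an equilibrium exhibiting dominant-firm polarization, i.e. $\mathbf a_i^*=\boldsymbol\beta$ for exactly one firm $i$, which satisfies $\gamma_i=\|\boldsymbol\gamma\|_\infty$, and $\mathbf a_j^*=-\boldsymbol\beta$ for all $j\ne i$. Moreover, every equilibrium $(\mathbf A^*,\mathbf q^* )$ is either of type (a), or satisfies $\mathbf a_i^*=\sigma_i\boldsymbol\beta$ for all $i$ for some $\boldsymbol\sigma\in\{-1,1\}^n$ (in which case $\boldsymbol\sigma$ satisfies $(2+\alpha)-\frac{2+(n+1)\alpha}{2(1+\alpha)}\min_{j:\sigma_j=-1}\gamma_j\le\boldsymbol\sigma^\top\boldsymbol\gamma\le(2+\alpha)+\frac{2+(n+1)\alpha}{2(1+\alpha)}\min_{j:\sigma_j=1}\gamma_j$, with $\min\emptyset=+\infty$, and $\mathbf q^*=\frac{\boldsymbol\gamma}{2+\alpha}-\frac{\alpha(\boldsymbol\sigma^\top\boldsymbol\gamma-(2+\alpha))}{(2+\alpha)(2+(n+1)\alpha)}\boldsymbol\sigma$).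
   Context: Model: integers $n\ge2$, $m\ge2$; $\alpha>0$, $\boldsymbol\beta\in\mathbb R^m$ with $\|\boldsymbol\beta\|_2=1$, $\boldsymbol\gamma\in\mathbb R^n$ with all $\gamma_i>0$. Firm $i$ chooses a unit vector $\mathbf a_i\in\mathbb R^m$ and $q_i\ge0$, earning $\Pi_i=\alpha q_i\mathbf a_i^\top(\boldsymbol\beta-\sum_{j\ne i}q_j\mathbf a_j)-(1+\alpha)q_i^2+\gamma_iq_i$. $\mathbf A=[\mathbf a_1,\dots,\mathbf a_n]$. An equilibrium is a profile $(\mathbf A^*,\mathbf q^* )$ in which each $(\mathbf a_i^*,q_i^* )$ maximizes $\Pi_i$ over unit $\mathbf a_i$ and $q_i\ge0$ given the others' choices. $\|\boldsymbol\gamma\|_\infty=\max_i\gamma_i$. *)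

From HB Require Import structures.
From mathcomp Require Import all_boot all_order all_algebra.
From mathcomp Require Import reals.
Set Implicit Arguments. Unset Strict Implicit. Unset Printing Implicit Defensive.
Import Order.TTheory GRing.Theory Num.Theory.
Local Open Scope ring_scope.

Definition vdot (R : realType) (k : nat) (u v : 'cV[R]_k) : R :=
  \sum_(l < k) u l 0 * v l 0.

Definition unit_vec (R : realType) (k : nat) (u : 'cV[R]_k) : Prop :=
  vdot u u = 1.

(* Profit of firm i when it plays (a, x) and the other firms play the
   columns of A (the strategies a_j) with quantities q_j. *)
Definition profit (R : realType) (n m : nat) (alpha : R)
  (beta : 'cV[R]_m) (gamma : 'cV[R]_n) (A : 'M[R]_(m, n)) (q : 'cV[R]_n)
  (i : 'I_n) (a : 'cV[R]_m) (x : R) : R :=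
  alpha * x * vdot a (beta - \sum_(j < n | j != i) (q j 0 *: col j A))
  - (1 + alpha) * x ^+ 2 + gamma i 0 * x.

Definition equilibrium (R : realType) (n m : nat) (alpha : R)
  (beta : 'cV[R]_m) (gamma : 'cV[R]_n) (A : 'M[R]_(m, n)) (q : 'cV[R]_n) : Prop :=
  forall i : 'I_n,
    unit_vec (col i A) /\ 0 <= q i 0 /\
    (forall (a : 'cV[R]_m) (x : R), unit_vec a -> 0 <= x ->
       profit alpha beta gamma A q i a x
       <= profit alpha beta gamma A q i (col i A) (q i 0)).

(* ||gamma||_oo (gamma has positive entries, so 0 is a valid seed). *)
Definition sup_norm (R : realType) (n : nat) (gamma : 'cV[R]_n) : R :=
  \big[Num.max/0]_(i < n) `|gamma i 0|.

(* At an equilibrium each firm's best response points along the demand left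
   to it by the others, at the quantity given by a first-order condition.
   Hence either the residual demand [beta - A q] vanishes, and the first-order
   conditions reduce to [q_i (2 + alpha) = gamma_i]; or every [a_i] is a
   multiple of the residual, hence so is [beta = (beta - A q) + A q], and
   [a_i = sigma_i beta].  In the latter case summing the first-order
   conditions weighted by [sigma] determines the residual and [q], and the
   bounds on [sigma' gamma] say exactly that the demand left to each firm has
   nonnegative length.
   For existence: if [sum gamma <= 2 + alpha] all firms play [beta]; if one
   [gamma_i] exceeds [2 + alpha] plus all the others, that firm plays [beta]
   and the others [-beta]; otherwise the lengths [gamma_i] and [2 + alpha]
   satisfy the polygon inequalities, so unit vectors with
   [sum_i gamma_i a_i = (2 + alpha) beta] exist, and they form a clearing
   equilibrium. *)

From HB Require Import structures.
From mathcomp Require Import all_boot all_order all_algebra.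
From mathcomp Require Import reals ring lra.
Set Implicit Arguments. Unset Strict Implicit. Unset Printing Implicit Defensive.
Import Order.TTheory GRing.Theory Num.Theory.
Local Open Scope ring_scope.

Section InnerProduct.
Variables (R : realType) (k : nat).
Implicit Types (u v w : 'cV[R]_k) (s t : R).

Lemma vdotC u v : vdot u v = vdot v u.
Proof. by apply: eq_bigr => l _; rewrite mulrC. Qed.

Lemma vdotDl u v w : vdot (u + v) w = vdot u w + vdot v w.
Proof. by rewrite /vdot -big_split; apply: eq_bigr => l _; rewrite !mxE mulrDl. Qed.

Lemma vdotZl s u w : vdot (s *: u) w = s * vdot u w.
Proof. by rewrite /vdot mulr_sumr; apply: eq_bigr => l _; rewrite !mxE mulrA. Qed.

Lemma vdotNl u w : vdot (- u) w = - vdot u w.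
Proof. by rewrite -scaleN1r vdotZl mulN1r. Qed.

Lemma vdotBl u v w : vdot (u - v) w = vdot u w - vdot v w.
Proof. by rewrite vdotDl vdotNl. Qed.

Lemma vdotDr u v w : vdot w (u + v) = vdot w u + vdot w v.
Proof. by rewrite vdotC vdotDl !(vdotC w). Qed.

Lemma vdotZr s u w : vdot w (s *: u) = s * vdot w u.
Proof. by rewrite vdotC vdotZl vdotC. Qed.

Lemma vdotNr u w : vdot w (- u) = - vdot w u.
Proof. by rewrite vdotC vdotNl vdotC. Qed.

Lemma vdotBr u v w : vdot w (u - v) = vdot w u - vdot w v.
Proof. by rewrite vdotDr vdotNr. Qed.

Lemma vdot_ge0 u : 0 <= vdot u u.
Proof. by apply: sumr_ge0 => l _; rewrite -expr2 sqr_ge0. Qed.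

Lemma vdot_eq0 u : (vdot u u == 0) = (u == 0).
Proof.
apply/idP/eqP => [|->]; last by rewrite /vdot big1 // => l _; rewrite mxE mul0r.
rewrite /vdot psumr_eq0 => [/allP u0|l _]; last by rewrite -expr2 sqr_ge0.
apply/matrixP => l j; rewrite (ord1 j) mxE.
by apply/eqP; rewrite -sqrf_eq0 expr2; apply: u0; rewrite mem_index_enum.
Qed.

Lemma unit_vec_neq0 u : unit_vec u -> u != 0.
Proof. by rewrite -vdot_eq0 => ->; rewrite oner_eq0. Qed.

Lemma unit_vecZ s u : unit_vec u -> unit_vec (s *: u) <-> s = 1 \/ s = -1.
Proof.
rewrite /unit_vec vdotZl vdotZr => ->; rewrite mulr1 -expr2.
split=> [/eqP|]; first by rewrite sqrf_eq1 => /orP[] /eqP; [left|right].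
by case=> ->; rewrite ?expr1n ?sqrrN ?expr1n.
Qed.

Lemma unit_vecN u : unit_vec u -> unit_vec (- u).
Proof. by move=> Uu; rewrite -scaleN1r; apply/unit_vecZ => //; right. Qed.

Lemma vdot_unit_le1 u v : unit_vec u -> unit_vec v -> vdot u v <= 1.
Proof.
move=> Uu Uv; have := vdot_ge0 (u - v).
rewrite !vdotBl !vdotBr Uu Uv (vdotC v u); lra.
Qed.

Lemma vdot_unit_eq1 u v : unit_vec u -> unit_vec v -> vdot u v = 1 -> u = v.
Proof.
move=> Uu Uv uv1; apply/eqP; rewrite -subr_eq0 -vdot_eq0.
by rewrite !vdotBl !vdotBr Uu Uv (vdotC v u) uv1 !subrr.
Qed.

Lemma unit_vec_scaleI s t u : unit_vec u -> s *: u = t *: u -> s = t.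
Proof.
by move=> Uu /(congr1 (fun x => vdot x u)); rewrite !vdotZl Uu !mulr1.
Qed.

(* [u] is only a fallback direction for [w = 0]. *)
Lemma scaled_unit_vec u w t : unit_vec u -> 0 <= t -> vdot w w = t ^+ 2 ->
  exists2 c, unit_vec c & w = t *: c.
Proof.
move=> Uu t_ge0 wwt; have [t0|t_neq0] := eqVneq t 0.
  by exists u => //; apply/eqP; rewrite t0 scale0r -vdot_eq0 wwt t0 expr0n.
exists (t^-1 *: w); last by rewrite scalerA mulfV ?scale1r.
by rewrite /unit_vec vdotZl vdotZr wwt mulrA -expr2 exprVn mulVf ?expf_neq0.
Qed.

Lemma polar_decomposition u w : unit_vec u ->
  exists t c, [/\ 0 <= t, unit_vec c & w = t *: c].
Proof.
move=> Uu; have t_ge0 : 0 <= Num.sqrt (vdot w w) by apply: sqrtr_ge0.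
have [c Uc ->] := scaled_unit_vec Uu t_ge0 (esym (sqr_sqrtr (vdot_ge0 w))).
by exists (Num.sqrt (vdot w w)), c.
Qed.

End InnerProduct.

Section BestResponse.
Variables (R : realType) (m : nat) (alpha g : R) (v : 'cV[R]_m).

Definition payoff (a : 'cV[R]_m) (x : R) : R :=
  alpha * x * vdot a v - (1 + alpha) * x ^+ 2 + g * x.

(* Completing the square in [x] around the unconstrained optimum [xs]. *)
Lemma payoffE t w xs a x : v = t *: w -> xs * (2 + 2 * alpha) = alpha * t + g ->
  payoff a x = (1 + alpha) * xs ^+ 2 - (1 + alpha) * (x - xs) ^+ 2
               - alpha * (x * t * (1 - vdot a w)).
Proof.
move=> vE xsE; rewrite /payoff vE vdotZr.
have gE : g = xs * (2 + 2 * alpha) - alpha * t by rewrite xsE addrAC subrr add0r.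
by rewrite gE; ring.
Qed.

Lemma best_responseP a0 x0 : 0 < alpha -> 0 < g -> unit_vec a0 -> 0 <= x0 ->
  (forall a x, unit_vec a -> 0 <= x -> payoff a x <= payoff a0 x0) <->
  exists r, [/\ 0 <= r, v = r *: a0 & x0 * (2 + 2 * alpha) = alpha * r + g].
Proof.
move=> alpha_gt0 g_gt0 Ua0 x0_ge0.
split=> [opt | [r [r_ge0 vE x0E]] a x Ua x_ge0]; last first.
  rewrite !(payoffE _ _ vE x0E) Ua0 !subrr expr0n !mulr0 !subr0.
  have : 0 <= alpha * (x * r * (1 - vdot a a0)).
    by rewrite pmulr_rge0 // !mulr_ge0 // subr_ge0 vdot_unit_le1.
  have : 0 <= (1 + alpha) * (x - x0) ^+ 2 by rewrite pmulr_rge0 ?sqr_ge0 ?addr_gt0.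
  by rewrite !expr2; lra.
have [t [w [t_ge0 Uw vE]]] := polar_decomposition v Ua0.
pose xs := (alpha * t + g) / (2 + 2 * alpha).
have xsE : xs * (2 + 2 * alpha) = alpha * t + g by rewrite mulfVK // gt_eqF //; lra.
have xs_gt0 : 0 < xs.
  by apply: divr_gt0; [have := mulr_ge0 (ltW alpha_gt0) t_ge0 | ]; lra.
have := opt w xs Uw (ltW xs_gt0).
rewrite !(payoffE _ _ vE xsE) Uw !subrr expr0n !mulr0 !subr0.
have gap1 : 0 <= (1 + alpha) * (x0 - xs) ^+ 2.
  by rewrite pmulr_rge0 ?sqr_ge0 ?addr_gt0.
have gap2 : 0 <= alpha * (x0 * t * (1 - vdot a0 w)).
  by rewrite pmulr_rge0 // !mulr_ge0 // subr_ge0 vdot_unit_le1.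
move=> le_opt.
have /eqP : (1 + alpha) * (x0 - xs) ^+ 2 = 0 by lra.
rewrite mulf_eq0 sqrf_eq0 subr_eq0 => /orP[|/eqP x0_xs]; first by move/eqP; lra.
have /eqP : alpha * (x0 * t * (1 - vdot a0 w)) = 0 by lra.
rewrite !mulf_eq0 subr_eq0 x0_xs (gt_eqF alpha_gt0) (gt_eqF xs_gt0) /=.
move=> /orP tw; exists t; split=> //.
case: tw => [/eqP t0 | /eqP/esym/(vdot_unit_eq1 Ua0 Uw) ->]; last by [].
by rewrite vE t0 !scale0r.
Qed.

End BestResponse.

Lemma mulmx_sum_col (R : comPzRingType) m n (A : 'M[R]_(m, n)) (q : 'cV[R]_n) :
  A *m q = \sum_j q j 0 *: col j A.
Proof.
apply/matrixP => l c; rewrite (ord1 c) !mxE summxE; apply: eq_bigr => j _.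
by rewrite !mxE mulrC.
Qed.

Section Equilibrium.
Variables (R : realType) (n m : nat) (alpha : R).
Variables (beta : 'cV[R]_m) (gamma : 'cV[R]_n).
Implicit Types (A : 'M[R]_(m, n)) (q : 'cV[R]_n).

Lemma sum_others_col A q i :
  \sum_(j < n | j != i) q j 0 *: col j A = A *m q - q i 0 *: col i A.
Proof.
by rewrite mulmx_sum_col [X in _ = X - _](bigD1 i) //= addrAC subrr add0r.
Qed.

(* [profit] of firm [i] is [payoff] for [g = gamma_i] and the demand
   [v = beta - sum_(j != i) q_j a_j] left by the others; [r] is its length. *)
Lemma equilibriumP A q : 0 < alpha -> (forall i, 0 < gamma i 0) ->
  equilibrium alpha beta gamma A q <->
  forall i, unit_vec (col i A) /\
    exists r, [/\ 0 <= r, beta - A *m q = (r - q i 0) *: col i A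
                 & q i 0 * (2 + 2 * alpha) = alpha * r + gamma i 0].
Proof.
move=> alpha_gt0 gamma_gt0; split=> [eqAq i | bestAq i].
  have [Ui [qi_ge0 opt]] := eqAq i; split=> //.
  have [r [r_ge0 vE qiE]] :=
    (best_responseP _ alpha_gt0 (gamma_gt0 i) Ui qi_ge0).1 opt.
  exists r; split=> //.
  by rewrite scalerBl -vE sum_others_col opprB addrA addrAC addrK.
have [Ui [r [r_ge0 dE qiE]]] := bestAq i.
have qi_ge0 : 0 <= q i 0.
  rewrite -(@pmulr_lge0 _ (2 + 2 * alpha)); last lra.
  by rewrite qiE; have := mulr_ge0 (ltW alpha_gt0) r_ge0; have := gamma_gt0 i; lra.
split; [done | split; first done].
apply: (best_responseP _ alpha_gt0 (gamma_gt0 i) Ui qi_ge0).2.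
exists r; split=> //.
by rewrite sum_others_col opprB addrA addrAC dE -scalerDl subrK.
Qed.

Lemma clearing_equilibrium A : 0 < alpha -> (forall i, 0 < gamma i 0) ->
  (forall i, unit_vec (col i A)) -> A *m gamma = (2 + alpha) *: beta ->
  equilibrium alpha beta gamma A ((2 + alpha)^-1 *: gamma).
Proof.
move=> alpha_gt0 gamma_gt0 UA AgE; apply/equilibriumP => // i.
split=> //; exists (((2 + alpha)^-1 *: gamma) i 0); split.
- by rewrite mxE mulr_ge0 ?invr_ge0 ?ltW //; lra.
- by rewrite -scalemxAr AgE scalerA mulVf ?scale1r ?subrr ?scale0r // gt_eqF //; lra.
- by rewrite mxE; field; lra.
Qed.

Lemma clearing_equilibrium_output A q : 0 < alpha -> (forall i, 0 < gamma i 0) ->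
  equilibrium alpha beta gamma A q -> A *m q = beta ->
  q = (2 + alpha)^-1 *: gamma.
Proof.
move=> alpha_gt0 gamma_gt0 /equilibriumP eqAq Aq_beta.
apply/matrixP => i j; rewrite (ord1 j) mxE.
have [Ui [r [_ dE qiE]]] := eqAq alpha_gt0 gamma_gt0 i.
move: dE; rewrite Aq_beta subrr => /esym/eqP.
rewrite scaler_eq0 (negbTE (unit_vec_neq0 Ui)) orbF subr_eq0 => /eqP r_qi.
have <- : q i 0 * (2 + alpha) = gamma i 0 by move: qiE; rewrite r_qi; lra.
by field; lra.
Qed.

End Equilibrium.

Section SignProfiles.
Variables (R : realType) (n m : nat) (alpha : R).
Variables (beta : 'cV[R]_m) (gamma sigma : 'cV[R]_n).

Definition sign_vec := forall i, sigma i 0 = 1 \/ sigma i 0 = -1.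

(* When every firm plays [sigma i 0 *: beta], the residual demand
   [beta - A q] at equilibrium is [sign_residual *: beta]. *)
Definition sign_residual : R :=
  (2 + alpha - vdot sigma gamma) / (2 + (n%:R + 1) * alpha).

Definition sign_output : 'cV[R]_n :=
  (2 + alpha)^-1 *: gamma
  - (alpha * (vdot sigma gamma - (2 + alpha))
     / ((2 + alpha) * (2 + (n%:R + 1) * alpha))) *: sigma.

Definition sign_feasible :=
  forall i, 0 <= sigma i 0 * sign_residual * (2 + 2 * alpha) + gamma i 0.

Lemma col_sign_matrix i : col i (beta *m sigma^T) = sigma i 0 *: beta.
Proof.
by apply/matrixP => l j; rewrite (ord1 j) !mxE big_ord1 !mxE mulrC.
Qed.

Lemma sign_sqr : sign_vec -> forall i, sigma i 0 * sigma i 0 = 1.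
Proof. by move=> sv i; case: (sv i) => ->; rewrite ?mulr1 ?mulrNN ?mulr1. Qed.

Lemma sign_denom_gt0 : 0 < alpha -> 0 < 2 + (n%:R + 1) * alpha.
Proof.
move=> alpha_gt0; have : (0 : R) <= n%:R * alpha by rewrite mulr_ge0 ?ler0n ?ltW.
lra.
Qed.

Lemma sign_outputE i : 0 < alpha ->
  sign_output i 0 * (2 + alpha) = alpha * sigma i 0 * sign_residual + gamma i 0.
Proof.
move=> alpha_gt0; have := sign_denom_gt0 alpha_gt0.
by rewrite !mxE /sign_residual => M_gt0; field; lra.
Qed.

Lemma sign_supply (q : 'cV[R]_n) (u : R) : sign_vec ->
  (forall i, q i 0 * (2 + alpha) = alpha * sigma i 0 * u + gamma i 0) ->
  (2 + alpha) * \sum_j sigma j 0 * q j 0 = n%:R * alpha * u + vdot sigma gamma.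
Proof.
move=> sv qE; rewrite mulr_sumr.
rewrite (eq_bigr (fun j => alpha * u + sigma j 0 * gamma j 0)).
  by rewrite big_split sumr_const card_ord -[alpha * u *+ n]mulr_natl mulrA.
move=> j _; rewrite mulrCA (mulrC _ (q j 0)) qE mulrDr.
have -> : sigma j 0 * (alpha * sigma j 0 * u) = alpha * u * (sigma j 0 * sigma j 0).
  by ring.
by rewrite sign_sqr // mulr1.
Qed.

Lemma sign_residualP (q : 'cV[R]_n) (u : R) : 0 < alpha -> sign_vec ->
  (forall i, q i 0 * (2 + alpha) = alpha * sigma i 0 * u + gamma i 0) ->
  u = sign_residual <-> 1 - \sum_j sigma j 0 * q j 0 = u.
Proof.
move=> alpha_gt0 sv qE; have supply := sign_supply sv qE.
have M_gt0 := sign_denom_gt0 alpha_gt0.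
rewrite /sign_residual; split=> [uE | Su].
  apply: (mulfI (_ : 2 + alpha != 0)); first by rewrite gt_eqF //; lra.
  by rewrite mulrBr mulr1 supply uE; field; rewrite gt_eqF.
apply: (mulIf (negbT (gt_eqF M_gt0))); rewrite mulfVK ?gt_eqF //.
by move: supply; rewrite -Su; lra.
Qed.

Lemma sign_profile_equilibriumP (A : 'M[R]_(m, n)) (q : 'cV[R]_n) :
  0 < alpha -> unit_vec beta -> (forall i, 0 < gamma i 0) -> sign_vec ->
  (forall i, col i A = sigma i 0 *: beta) ->
  let u := 1 - \sum_j sigma j 0 * q j 0 in
  equilibrium alpha beta gamma A q <->
  forall i, 0 <= sigma i 0 * u + q i 0 /\
            q i 0 * (2 + alpha) = alpha * sigma i 0 * u + gamma i 0.
Proof.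
move=> alpha_gt0 Ubeta gamma_gt0 sv colA u.
have dE : beta - A *m q = u *: beta.
  rewrite mulmx_sum_col scalerBl scale1r scaler_suml; congr (_ - _).
  by apply: eq_bigr => j _; rewrite colA scalerA mulrC.
have rE i r : u *: beta = (r - q i 0) *: (sigma i 0 *: beta) <->
              r = sigma i 0 * u + q i 0.
  rewrite scalerA; split=> [/(unit_vec_scaleI Ubeta) -> | ->].
    by rewrite mulrCA sign_sqr // mulr1 subrK.
  by rewrite addrK mulrAC sign_sqr // mul1r.
rewrite equilibriumP //; split=> eqAq i.
  have [_ [r [r_ge0]]] := eqAq i; rewrite dE colA rE => r_def qiE; subst r.
  by split=> //; lra.
have [r_ge0 qiE] := eqAq i; split; first by rewrite colA unit_vecZ.
exists (sigma i 0 * u + q i 0); split=> //; first by rewrite dE colA rE.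
lra.
Qed.

Lemma sign_equilibriumP (A : 'M[R]_(m, n)) (q : 'cV[R]_n) :
  0 < alpha -> unit_vec beta -> (forall i, 0 < gamma i 0) -> sign_vec ->
  (forall i, col i A = sigma i 0 *: beta) ->
  equilibrium alpha beta gamma A q <-> q = sign_output /\ sign_feasible.
Proof.
move=> alpha_gt0 Ubeta gamma_gt0 sv colA.
have two_alpha_gt0 : 0 < 2 + alpha by lra.
rewrite sign_profile_equilibriumP //=; split=> [eqAq | [-> feas] i].
  have qE i := (eqAq i).2; have uE := (sign_residualP alpha_gt0 sv qE).2 erefl.
  split=> [|i].
    apply/matrixP => i j; rewrite (ord1 j).
    apply: (mulIf (negbT (gt_eqF two_alpha_gt0))).
    by rewrite sign_outputE // qE uE.
  have [pos _] := eqAq i; rewrite -uE.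
  have := mulr_ge0 (ltW two_alpha_gt0) pos; move: (qE i); lra.
have qE j := sign_outputE j alpha_gt0.
rewrite ((sign_residualP alpha_gt0 sv qE).1 erefl); split; last exact: qE.
rewrite -(pmulr_rge0 _ two_alpha_gt0).
by have := feas i; move: (qE i); lra.
Qed.

Lemma sign_feasible_bounds : 0 < alpha -> sign_feasible ->
  (forall j, sigma j 0 = -1 ->
     (2 + alpha) - (2 + (n%:R + 1) * alpha) / (2 * (1 + alpha)) * gamma j 0
     <= vdot sigma gamma) /\
  (forall j, sigma j 0 = 1 ->
     vdot sigma gamma
     <= (2 + alpha) + (2 + (n%:R + 1) * alpha) / (2 * (1 + alpha)) * gamma j 0).
Proof.
move=> alpha_gt0 feas.
set K := (2 + (n%:R + 1) * alpha) / (2 * (1 + alpha)).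
have K_gt0 : 0 < K by rewrite divr_gt0 ?sign_denom_gt0 //; lra.
have scaled j : 0 <= sigma j 0 * (2 + alpha - vdot sigma gamma) + K * gamma j 0.
  have -> : sigma j 0 * (2 + alpha - vdot sigma gamma) + K * gamma j 0
          = K * (sigma j 0 * sign_residual * (2 + 2 * alpha) + gamma j 0).
    rewrite /K /sign_residual; field.
    by rewrite !gt_eqF ?sign_denom_gt0 //; lra.
  exact: mulr_ge0 (ltW K_gt0) (feas j).
by split=> j sj; have := scaled j; rewrite sj; lra.
Qed.

End SignProfiles.

Lemma equilibrium_aligned (R : realType) n m (alpha : R) (beta : 'cV[R]_m)
    (gamma : 'cV[R]_n) (A : 'M[R]_(m, n)) (q : 'cV[R]_n) :
  0 < alpha -> unit_vec beta -> (forall i, 0 < gamma i 0) ->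
  equilibrium alpha beta gamma A q -> A *m q != beta ->
  exists2 sigma : 'cV[R]_n, sign_vec sigma & forall i, col i A = sigma i 0 *: beta.
Proof.
move=> alpha_gt0 Ubeta gamma_gt0 /equilibriumP eqAq Aq_neq.
have {}eqAq := eqAq alpha_gt0 gamma_gt0.
set d := beta - A *m q.
have d_neq0 : d != 0 by rewrite subr_eq0 eq_sym.
pose c i := vdot d (col i A).
have dE i : d = c i *: col i A.
  have [Ui [r [_ dE _]]] := eqAq i; rewrite -/d in dE.
  by rewrite /c {2}dE vdotZl Ui mulr1 -dE.
have c_neq0 i : c i != 0.
  by apply: contra_neq d_neq0; rewrite (dE i) => ->; rewrite scale0r.
have colE i : col i A = (c i)^-1 *: d by rewrite (dE i) scalerA mulVf ?scale1r.
pose s := 1 + \sum_j q j 0 / c j.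
have betaE : beta = s *: d.
  rewrite -[beta](subrK (A *m q)) -/d mulmx_sum_col scalerDl scale1r.
  by congr (_ + _); rewrite scaler_suml; apply: eq_bigr => j _; rewrite colE scalerA.
have s_neq0 : s != 0.
  by apply: contra_neq (unit_vec_neq0 Ubeta) => s0; rewrite betaE s0 scale0r.
have colbeta i : col i A = (c i * s)^-1 *: beta.
  by rewrite colE betaE scalerA invfM mulfVK.
exists (\col_i (c i * s)^-1) => i; rewrite mxE //.
by apply/(unit_vecZ _ Ubeta); rewrite -colbeta; case: (eqAq i).
Qed.

Lemma sup_normE (R : realType) n (gamma : 'cV[R]_n) i :
  (forall j, 0 <= gamma j 0) -> (forall j, gamma j 0 <= gamma i 0) ->
  sup_norm gamma = gamma i 0.
Proof.
move=> gamma_ge0 gamma_le; apply/eqP; rewrite eq_le; apply/andP; split.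
  apply: (big_ind (fun x => x <= gamma i 0)) => [|x y ? ?|j _].
  - exact: gamma_ge0.
  - by rewrite ge_max; apply/andP.
  - by rewrite ger0_norm.
by rewrite /sup_norm (bigD1 i) //= le_max ger0_norm ?lexx.
Qed.

Section Feasibility.
Variables (R : realType) (n : nat) (alpha : R) (gamma : 'cV[R]_n).

Lemma all_ones_sign_vec : sign_vec (const_mx 1 : 'cV[R]_n).
Proof. by move=> i; left; rewrite mxE. Qed.

Lemma all_ones_feasible : 0 < alpha -> (forall i, 0 < gamma i 0) ->
  \sum_i gamma i 0 <= 2 + alpha -> sign_feasible alpha gamma (const_mx 1).
Proof.
move=> alpha_gt0 gamma_gt0 small i; rewrite mxE mul1r.
have vdot1 : vdot (const_mx 1) gamma = \sum_i gamma i 0.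
  by apply: eq_bigr => j _; rewrite mxE mul1r.
have res_ge0 : 0 <= sign_residual alpha gamma (const_mx 1).
  apply: divr_ge0; first by rewrite vdot1 subr_ge0.
  exact: ltW (sign_denom_gt0 n alpha_gt0).
have : 0 <= sign_residual alpha gamma (const_mx 1) * (2 + 2 * alpha).
  by rewrite mulr_ge0 //; lra.
by have := gamma_gt0 i; lra.
Qed.

Definition dominant_sign (i : 'I_n) : 'cV[R]_n := \col_j (if j == i then 1 else -1).

Lemma dominant_sign_vec i : sign_vec (dominant_sign i).
Proof. by move=> j; rewrite mxE; case: eqP; [left | right]. Qed.

Lemma vdot_dominant_sign i :
  vdot (dominant_sign i) gamma = gamma i 0 - \sum_(j < n | j != i) gamma j 0.
Proof.
rewrite /vdot (bigD1 i) //= mxE eqxx mul1r -sumrN.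
by congr (_ + _); apply: eq_bigr => j ji; rewrite mxE (negbTE ji) mulN1r.
Qed.

Lemma dominant_feasible i : 0 < alpha -> (forall j, 0 < gamma j 0) ->
  2 + alpha + \sum_(j < n | j != i) gamma j 0 < gamma i 0 ->
  sign_feasible alpha gamma (dominant_sign i).
Proof.
move=> alpha_gt0 gamma_gt0 dom j.
have n_ge1 : (1 : R) <= n%:R by rewrite ler1n (leq_ltn_trans (leq0n i)).
have M_gt0 := sign_denom_gt0 n alpha_gt0.
set t := 2 + alpha - vdot (dominant_sign i) gamma.
have t_lt0 : t < 0 by rewrite /t vdot_dominant_sign; lra.
set F := (2 + 2 * alpha) / (2 + (n%:R + 1) * alpha).
have F_ge0 : 0 <= F by rewrite divr_ge0 ?ltW //; lra.
have F_le1 : F <= 1.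
  rewrite ler_pdivrMr // mul1r.
  have : 0 <= (n%:R - 1) * alpha by apply: mulr_ge0; [rewrite subr_ge0 | exact: ltW].
  lra.
have resE : sign_residual alpha gamma (dominant_sign i) * (2 + 2 * alpha) = t * F.
  by rewrite /sign_residual /F -/t mulrAC mulrA.
rewrite -mulrA resE mxE; case: eqP => [-> | _].
  have : 0 <= t * (F - 1) by apply: mulr_le0; [exact: ltW | rewrite subr_le0].
  rewrite mulrBr mulr1 subr_ge0 mul1r => tF.
  have : 0 <= \sum_(k < n | k != i) gamma k 0 by apply: sumr_ge0 => k _; apply: ltW.
  by rewrite /t vdot_dominant_sign in tF *; lra.
have : t * F <= 0 by apply: mulr_le0_ge0 => //; exact: ltW.
by rewrite mulN1r; have := gamma_gt0 j; lra.
Qed.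

Lemma dominant_sup_norm i : (forall j, 0 < gamma j 0) ->
  \sum_(j < n | j != i) gamma j 0 <= gamma i 0 -> sup_norm gamma = gamma i 0.
Proof.
move=> gamma_gt0 dom; apply: sup_normE => j; first exact: ltW.
have [-> // | ji] := eqVneq j i; apply: le_trans dom.
by rewrite (bigD1 j) //= lerDl; apply: sumr_ge0 => k _; apply: ltW.
Qed.

End Feasibility.

Arguments dominant_sign {R n} i.

Section Geometry.
Variables (R : realType) (m : nat) (beta : 'cV[R]_m).

Definition basis_vec (i : 'I_m) : 'cV[R]_m := \col_l (l == i)%:R.

Lemma vdot_basis_vec u i : vdot u (basis_vec i) = u i 0.
Proof.
rewrite /vdot (bigD1 i) //= big1 => [|l li]; rewrite !mxE ?eqxx ?mulr1 ?addr0 //.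
by rewrite (negbTE li) mulr0.
Qed.

Lemma exists_orthogonal_unit : (2 <= m)%N ->
  exists2 e, unit_vec e & vdot beta e = 0.
Proof.
move=> m_ge2; have m_gt0 : (0 < m)%N by apply: leq_trans m_ge2.
set i0 := Ordinal m_gt0; set i1 := Ordinal m_ge2.
have i10 : i1 != i0 by [].
set b0 := beta i0 0; set b1 := beta i1 0.
have e0_unit : unit_vec (basis_vec i0) by rewrite /unit_vec vdot_basis_vec mxE eqxx.
have [b0_0 | b_neq0] := eqVneq (b0 ^+ 2 + b1 ^+ 2) 0.
  exists (basis_vec i0); rewrite // vdot_basis_vec -/b0.
  by apply/eqP; rewrite -sqrf_eq0 eq_le sqr_ge0 andbT; have := sqr_ge0 b1; lra.
(* [(b1, -b0)] is orthogonal to [(b0, b1)] in the plane of the first two axes. *)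
pose f := b1 *: basis_vec i0 - b0 *: basis_vec i1.
have fE u : vdot u f = b1 * u i0 0 - b0 * u i1 0.
  by rewrite /f vdotBr !vdotZr !vdot_basis_vec.
have s_ge0 : 0 <= Num.sqrt (b0 ^+ 2 + b1 ^+ 2) by apply: sqrtr_ge0.
have [e Ue fe] : exists2 e, unit_vec e & f = Num.sqrt (b0 ^+ 2 + b1 ^+ 2) *: e.
  apply: (scaled_unit_vec e0_unit s_ge0).
  rewrite sqr_sqrtr ?addr_ge0 ?sqr_ge0 // fE /f !mxE !eqxx (negbTE i10).
  rewrite eq_sym (negbTE i10).
  by rewrite -!/b0 -!/b1 /=; ring.
exists e => //; apply: (mulfI (_ : Num.sqrt (b0 ^+ 2 + b1 ^+ 2) != 0)).
  by rewrite sqrtr_eq0 -ltNge lt_def b_neq0 addr_ge0 ?sqr_ge0.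
by rewrite -vdotZr -fe fE mulr0 -/b0 -/b1 mulrC subrr.
Qed.

Section Plane.
Variable e : 'cV[R]_m.
Hypotheses (Ubeta : unit_vec beta) (Ue : unit_vec e) (beta_e : vdot beta e = 0).

Lemma vdot_plane x y :
  vdot (x *: beta + y *: e) (x *: beta + y *: e) = x ^+ 2 + y ^+ 2.
Proof.
rewrite !vdotDl !vdotDr !vdotZl !vdotZr Ubeta Ue beta_e (vdotC e) beta_e.
by ring.
Qed.

Lemma triangle_closure X Y Z : 0 < X -> 0 <= Y -> 0 <= Z ->
  X <= Y + Z -> Y <= X + Z -> Z <= X + Y ->
  exists b c, [/\ unit_vec b, unit_vec c & Y *: b + Z *: c = X *: beta].
Proof.
move=> X_gt0 Y_ge0 Z_ge0 tri1 tri2 tri3.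
(* The apex where the sides [Y] and [Z] meet is [p beta + h e] (law of
   cosines). *)
pose p := (X ^+ 2 + Y ^+ 2 - Z ^+ 2) / (2 * X).
have h2_ge0 : 0 <= Y ^+ 2 - p ^+ 2.
  have -> : Y ^+ 2 - p ^+ 2 = (Z + X - Y) * (Z - X + Y) * ((X + Y) ^+ 2 - Z ^+ 2)
                               / (2 * X) ^+ 2.
    by rewrite /p; field; rewrite gt_eqF.
  apply: divr_ge0 (sqr_ge0 _); apply: mulr_ge0; first by apply: mulr_ge0; lra.
  by rewrite subr_ge0 ler_sqr ?nnegrE; lra.
pose h := Num.sqrt (Y ^+ 2 - p ^+ 2).
have h2E : h ^+ 2 = Y ^+ 2 - p ^+ 2 by rewrite sqr_sqrtr.
have [b Ub bE] : exists2 b, unit_vec b & p *: beta + h *: e = Y *: b.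
  by apply: scaled_unit_vec Ubeta Y_ge0 _; rewrite vdot_plane h2E; ring.
have [c Uc cE] : exists2 c, unit_vec c & (X - p) *: beta + (- h) *: e = Z *: c.
  apply: scaled_unit_vec Ubeta Z_ge0 _.
  by rewrite vdot_plane sqrrN h2E /p; field; rewrite gt_eqF.
exists b, c; split=> //; rewrite -bE -cE addrACA -scalerDl scaleNr subrr addr0.
by rewrite addrC subrK.
Qed.

End Plane.
End Geometry.

Lemma exists_crossing (P : pred nat) n : P 0%N -> ~~ P n ->
  exists k, [/\ (k < n)%N, P k & ~~ P k.+1].
Proof.
elim: n => [-> //|n IHn] P0 Pn; have [Pn'|nPn] := boolP (P n).
  by exists n; rewrite ltnSn.
by have [k [lt_kn Pk nPk]] := IHn P0 nPn; exists k; rewrite ltnW.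
Qed.

Section OrdinalPrefix.
Variables (V : nmodType) (n k : nat) (lt_kn : (k < n)%N) (F : 'I_n -> V).

Lemma sum_prefixS :
  \sum_(i < n | (i < k.+1)%N) F i = \sum_(i < n | (i < k)%N) F i + F (Ordinal lt_kn).
Proof.
rewrite (bigD1 (Ordinal lt_kn)) ?ltnSn //= addrC; congr (_ + _).
by apply: eq_bigl => i; rewrite -val_eqE /= ltnS; case: ltngtP.
Qed.

Lemma sum_split_at :
  \sum_i F i = \sum_(i < n | (i < k)%N) F i + F (Ordinal lt_kn)
               + \sum_(i < n | (k < i)%N) F i.
Proof.
rewrite (bigID (fun i : 'I_n => (i < k.+1)%N)) /= sum_prefixS; congr (_ + _).
by apply: eq_bigl => i; rewrite -leqNgt.
Qed.

End OrdinalPrefix.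

(* The sides before [k] go along [-beta]; side [k] and the remaining sides,
   laid along a common direction, close a triangle with the side [G + Sp k],
   where [k] is chosen so that [G + Sp k] crosses the half-perimeter. *)
Lemma closed_polygon (R : realType) (n m : nat) (beta : 'cV[R]_m)
    (l : 'cV[R]_n) (G : R) :
  (2 <= m)%N -> unit_vec beta -> 0 < G -> (forall i, 0 < l i 0) ->
  G <= \sum_i l i 0 -> (forall i, l i 0 <= G + \sum_(j < n | j != i) l j 0) ->
  exists A : 'M[R]_(m, n), (forall i, unit_vec (col i A)) /\ A *m l = G *: beta.
Proof.
move=> m_ge2 Ubeta G_gt0 l_gt0 G_le_L polygon.
have [e Ue beta_e] := exists_orthogonal_unit beta m_ge2.
set L := \sum_i l i 0 in G_le_L.
pose Sp k := \sum_(i < n | (i < k)%N) l i 0.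
have Sp_ge0 k : 0 <= Sp k by apply: sumr_ge0 => i _; apply: ltW.
have [k [lt_kn Pk nPk]] :
    exists k, [/\ (k < n)%N, G + Sp k <= (G + L) / 2
                 & ~~ (G + Sp k.+1 <= (G + L) / 2)].
  have Sp0 : Sp 0%N = 0 by rewrite /Sp big_pred0 // => i; rewrite ltn0.
  have SpL : Sp n = L by apply: eq_bigl => i; rewrite ltn_ord.
  by apply: exists_crossing; rewrite ?Sp0 -?ltNge ?SpL; lra.
set X := G + Sp k; set Y := l (Ordinal lt_kn) 0.
set Z := \sum_(i < n | (k < i)%N) l i 0.
have LE : L = Sp k + Y + Z by rewrite /L (sum_split_at lt_kn).
move: nPk; rewrite /Sp sum_prefixS -/(Sp k) -/Y -ltNge => nPk.
have Z_ge0 : 0 <= Z by apply: sumr_ge0 => i _; apply: ltW.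
have othersE : \sum_(j < n | j != Ordinal lt_kn) l j 0 = L - Y.
  by rewrite /L [in RHS](bigD1 (Ordinal lt_kn)) //= addrAC subrr add0r.
have X_gt0 : 0 < X by rewrite /X; have := Sp_ge0 k; lra.
have Y_ge0 : 0 <= Y := ltW (l_gt0 _).
have XYZ : X <= Y + Z by move: Pk; rewrite /X LE; lra.
have YXZ : Y <= X + Z.
  by have := polygon (Ordinal lt_kn); rewrite othersE /X LE -/Y; lra.
have ZXY : Z <= X + Y by move: nPk; rewrite /X LE; lra.
have [b [c [Ub Uc bcE]]] :=
  triangle_closure Ubeta Ue beta_e X_gt0 Y_ge0 Z_ge0 XYZ YXZ ZXY.
pose a i := if (i < k)%N then - beta else if (k < i)%N then c else b.
exists (\matrix_(r, i) a i r 0).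
have colE i : col i (\matrix_(r, i) a i r 0) = a i.
  by apply/matrixP => r j; rewrite (ord1 j) !mxE.
split=> [i | ].
  by rewrite colE /a; case: ifP => _; [exact: unit_vecN | case: ifP].
rewrite mulmx_sum_col (sum_split_at lt_kn) !colE /a /= ltnn.
under eq_bigr => i lt_ik do rewrite colE /a lt_ik scalerN -scaleNr.
under [X in _ + X]eq_bigr => i lt_ki do rewrite colE /a ltnNge (ltnW lt_ki) lt_ki /=.
rewrite -!scaler_suml -/Z sumrN -/(Sp k) -addrA bcE -scalerDl.
by congr (_ *: _); rewrite /X; ring.
Qed.

Lemma clearing_equilibrium_exists (R : realType) n m (alpha : R)
    (beta : 'cV[R]_m) (gamma : 'cV[R]_n) :
  (2 <= m)%N -> 0 < alpha -> unit_vec beta -> (forall i, 0 < gamma i 0) ->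
  2 + alpha <= \sum_i gamma i 0 ->
  (forall i, gamma i 0 <= 2 + alpha + \sum_(j < n | j != i) gamma j 0) ->
  exists A : 'M[R]_(m, n), equilibrium alpha beta gamma A ((2 + alpha)^-1 *: gamma)
                          /\ A *m ((2 + alpha)^-1 *: gamma) = beta.
Proof.
move=> m_ge2 alpha_gt0 Ubeta gamma_gt0 large polygon.
have [|A [UA AE]] := closed_polygon m_ge2 Ubeta _ gamma_gt0 large polygon; first lra.
exists A; split; first exact: clearing_equilibrium.
by rewrite -scalemxAr AE scalerA mulVf ?scale1r // gt_eqF //; lra.
Qed.

Theorem theorem1 (R : realType) (n m : nat) (alpha : R)
  (beta : 'cV[R]_m) (gamma : 'cV[R]_n) :
  (2 <= n)%N -> (2 <= m)%N -> 0 < alpha -> unit_vec beta ->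
  (forall i, 0 < gamma i 0) ->
  ((exists (A : 'M[R]_(m, n)) (q : 'cV[R]_n),
      equilibrium alpha beta gamma A q /\
      A *m q = beta /\ q = (2 + alpha)^-1 *: gamma)
   \/ (exists (A : 'M[R]_(m, n)) (q : 'cV[R]_n),
      equilibrium alpha beta gamma A q /\ (forall i, col i A = beta))
   \/ (exists (A : 'M[R]_(m, n)) (q : 'cV[R]_n),
      equilibrium alpha beta gamma A q /\
      exists i : 'I_n,
        col i A = beta /\ gamma i 0 = sup_norm gamma /\
        (forall j, j != i -> col j A = - beta)))
  /\
  (forall (A : 'M[R]_(m, n)) (q : 'cV[R]_n),
     equilibrium alpha beta gamma A q ->
     (A *m q = beta /\ q = (2 + alpha)^-1 *: gamma)
     \/ (exists sigma : 'cV[R]_n,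
           (forall i, sigma i 0 = 1 \/ sigma i 0 = -1) /\
           (forall i, col i A = sigma i 0 *: beta) /\
           (forall j, sigma j 0 = -1 ->
              (2 + alpha) - (2 + (n%:R + 1) * alpha) / (2 * (1 + alpha)) * gamma j 0
              <= vdot sigma gamma) /\
           (forall j, sigma j 0 = 1 ->
              vdot sigma gamma
              <= (2 + alpha) + (2 + (n%:R + 1) * alpha) / (2 * (1 + alpha)) * gamma j 0) /\
           q = (2 + alpha)^-1 *: gamma
               - (alpha * (vdot sigma gamma - (2 + alpha))
                  / ((2 + alpha) * (2 + (n%:R + 1) * alpha))) *: sigma)).
Proof.
move=> _ m_ge2 alpha_gt0 Ubeta gamma_gt0.
have sign_eq sigma : sign_vec sigma -> sign_feasible alpha gamma sigma ->
    equilibrium alpha beta gamma (beta *m sigma^T) (sign_output alpha gamma sigma).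
  by move=> sv feas; apply/sign_equilibriumP => //; apply: col_sign_matrix.
split.
  have [small | large] := lerP (\sum_i gamma i 0) (2 + alpha).
    right; left; exists (beta *m (const_mx 1)^T).
    exists (sign_output alpha gamma (const_mx 1)); split.
      by apply: sign_eq; [exact: all_ones_sign_vec | exact: all_ones_feasible].
    by move=> i; rewrite col_sign_matrix mxE scale1r.
  have [i dom | nodom] :=
    pickP (fun i => 2 + alpha + \sum_(j < n | j != i) gamma j 0 < gamma i 0).
    right; right; exists (beta *m (dominant_sign i)^T).
    exists (sign_output alpha gamma (dominant_sign i)); split.
      by apply: sign_eq; [exact: dominant_sign_vec | exact: dominant_feasible].
    exists i; rewrite !col_sign_matrix mxE eqxx scale1r; split=> //; split=> [|j ji].
      by apply/esym/dominant_sup_norm => //; lra.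
    by rewrite col_sign_matrix mxE (negbTE ji) scaleN1r.
  left; have [|i|A [eqA AqE]] :=
    clearing_equilibrium_exists m_ge2 alpha_gt0 Ubeta gamma_gt0.
  - exact: ltW.
  - by have := nodom i; rewrite leNgt => ->.
  - by exists A, ((2 + alpha)^-1 *: gamma).
move=> A q eqAq; have [Aq_beta | Aq_neq] := eqVneq (A *m q) beta.
  by left; split=> //; apply: clearing_equilibrium_output eqAq Aq_beta.
right; have [sigma sv colA] :=
  equilibrium_aligned alpha_gt0 Ubeta gamma_gt0 eqAq Aq_neq.
have [-> feas] := (sign_equilibriumP _ alpha_gt0 Ubeta gamma_gt0 sv colA).1 eqAq.
by exists sigma; have [lo hi] := sign_feasible_bounds alpha_gt0 feas.
Qed.
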